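(* Let $\mathcal G=(\mathcal V,\mathcal E,W)$ be a network with $n=|\mathcal V|$ nodes and out-degree vector $w$, let $h^-\le h^+$ in $\mathbb R^{\mathcal V}$ and $\mathcal H=\prod_i[h_i^-,h_i^+]$, and assume $\mathcal G$ is $\mathcal H$-robustly indecomposable. Then: (i) for every configuration $x\in\mathcal X$ there exists an $\mathcal H$-robust I-path of length at most $n$ from $x$ to some configuration in $\{\pm\mathbf 1\}$; in particular $\{\pm\mathbf 1\}$ is globally I-reachable for the coordination game with every external field $h\in\mathcal H$; (ii) if $w\ge h^+$ and $w\ge -h^-$ (i.e., the game is $\mathcal H$-robustly regular), then for every $h\in\mathcal H$ the set of equilibria is $\mathcal X^*_h=\{\pm\mathbf 1\}$ and it is globally I-stable; (iii) if for some $a\in\{\pm1\}$ one has $w\ge -a\,h^{-a}$ and $w\ngeq a\,h^{-a}$, then from every configuration $x\in\mathcal X$ there exists an $\mathcal H$-robust I-path to $a\mathbf 1$, and for every $h\in\mathcal H$ the set of equilibria is $\mathcal X^*_h=\{a\mathbf 1\}$ and it is globally BR-stable.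
   Context: A network is $\mathcal G=(\mathcal V,\mathcal E,W)$ with finite node set $\mathcal V$, links $\mathcal E\subseteq\mathcal V\times\mathcal V$, weight matrix $W\in\mathbb R_+^{\mathcal V\times\mathcal V}$ with zero diagonal, $W_{ij}>0$ iff $(i,j)\in\mathcal E$; for $\mathcal S\subseteq\mathcal V$, $w_i^{\mathcal S}=\sum_{j\in\mathcal S}W_{ij}$; $w=W\mathbf 1$. $\mathcal X=\{-1,+1\}^{\mathcal V}$. Componentwise order; $x\ngeq y$ means $x_i<y_i$ for some $i$. For $a=+1$ (resp. $-1$), $h^{-a}$ denotes $h^-$ (resp. $h^+$). $h$-indecomposable: for every partition $\mathcal V=\mathcal V^+\cup\mathcal V^-$ into two disjoint nonempty sets there exist $s\in\{-,+\}$ and $i\in\mathcal V^s$ with $w_i^{\mathcal V^s}+s\,h_i<w_i^{\mathcal V^{-s}}$ ($s\,h_i$ is $\pm h_i$ according to $s$, $-s$ is the opposite sign). $\mathcal G$ is $\mathcal H$-robustly indecomposable if it is $h$-indecomposable for every $h\in\mathcal H$. Coordination game with external field $h$: players $\mathcal V$, actions $\{\pm1\}$, utilities $u_i(x)=x_i(\sum_jW_{ij}x_j+h_i)$; equilibria $x^*$ with $x_i^*$ maximizing $u_i(\cdot,x^*_{-i})$, set $\mathcal X^*_h$. An admissible path of length $l\ge0$ is a sequence $x^{(0)},\dots,x^{(l)}$ with consecutive configurations differing exactly in the action of one player $i_k$; for a given $h$ it is an I-path if $u_{i_k}(x^{(k)})>u_{i_k}(x^{(k-1)})$ for all $k$,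 a BR-path if $\ge$ holds instead. An $\mathcal H$-robust I-path is an admissible path that is an I-path for the game with external field $h$ for every $h\in\mathcal H$. For $\alpha\in\{\mathrm I,\mathrm{BR}\}$, $\mathcal Y\subseteq\mathcal X$ is globally $\alpha$-reachable if from every $x$ there is an $\alpha$-path to some element of $\mathcal Y$, and globally $\alpha$-stable if in addition there is no $\alpha$-path from any $y\in\mathcal Y$ to any $z\notin\mathcal Y$. *)

From mathcomp Require Import all_boot all_order all_algebra.
Set Implicit Arguments. Unset Strict Implicit. Unset Printing Implicit Defensive.
Import Order.TTheory GRing.Theory Num.Theory.
Local Open Scope ring_scope.

Section Game.
Variables (R : realFieldType) (V : finType).

(* configurations x in {-1,+1}^V, encoded as booleans: true = +1, false = -1 *)
Definition config := {ffun V -> bool}.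
Definition act (b : bool) : R := if b then 1 else -1.

Definition wS (W : V -> V -> R) (i : V) (S : {set V}) : R := \sum_(j in S) W i j.
Definition wdeg (W : V -> V -> R) (i : V) : R := \sum_j W i j.

(* network: nonnegative weights with zero diagonal (links = positive weights) *)
Definition is_network (W : V -> V -> R) : Prop :=
  (forall i j, 0 <= W i j) /\ (forall i, W i i = 0).

(* h-indecomposability: A = V^+, ~: A = V^- *)
Definition h_indecomposable (W : V -> V -> R) (h : V -> R) : Prop :=
  forall A : {set V}, A != set0 -> ~: A != set0 ->
    (exists2 i, i \in A & wS W i A + h i < wS W i (~: A)) \/
    (exists2 i, i \in ~: A & wS W i (~: A) - h i < wS W i A).

Definition inH (hm hp h : V -> R) : Prop := forall i, hm i <= h i <= hp i.

Definition robustly_indecomposable (W : V -> V -> R) (hm hp : V -> R) : Prop :=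
  forall h, inH hm hp h -> h_indecomposable W h.

Definition util (W : V -> V -> R) (h : V -> R) (i : V) (x : config) : R :=
  act (x i) * (\sum_j W i j * act (x j) + h i).

Definition setc (x : config) (i : V) (b : bool) : config :=
  [ffun j => if j == i then b else x j].

Definition is_equilibrium (W : V -> V -> R) (h : V -> R) (x : config) : Prop :=
  forall i b, util W h i (setc x i b) <= util W h i x.

Definition equilibria (W : V -> V -> R) (h : V -> R) : {set config} :=
  [set x | [forall i, forall b, util W h i (setc x i b) <= util W h i x]].

Definition adj (i : V) (x y : config) : bool :=
  [forall j, (j != i) ==> (y j == x j)] && (y i != x i).

Definition Istep (W : V -> V -> R) (h : V -> R) : rel config :=
  fun x y => [exists i, adj i x y && (util W h i x < util W h i y)].
Definition BRstep (W : V -> V -> R) (h : V -> R) : rel config :=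
  fun x y => [exists i, adj i x y && (util W h i x <= util W h i y)].

(* the path x = x^(0), s_1, ..., s_l  (length l = size s) *)
Definition robust_Ipath (W : V -> V -> R) (hm hp : V -> R) (x : config)
  (s : seq config) : Prop :=
  forall h, inH hm hp h -> path (Istep W h) x s.

Definition globally_reachable (step : rel config) (Y : {set config}) : Prop :=
  forall x, exists s, path step x s /\ last x s \in Y.

Definition globally_stable (step : rel config) (Y : {set config}) : Prop :=
  globally_reachable step Y /\
  forall y s, y \in Y -> path step y s -> last y s \in Y.

Definition cst (b : bool) : config := [ffun _ => b].
Definition pm1 : {set config} := [set cst true; cst false].

End Game.

From mathcomp Require Import all_boot all_order all_algebra.
From mathcomp Require Import lra.

(* Call a set Y of nodes cohesive (for h^+) if every i in Y has
   w_i^Y + h^+_i >= w_i^{V \ Y}.  If the +1 players of x contain a nonempty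
   cohesive set, take a maximal one Z: robust indecomposability, applied to the
   field equal to h^+ on Z and h^- off Z, yields a node j outside Z with
   w_j^Z - h^-_j < w_j^{V \ Z}.  By maximality j is a -1 player, and it strictly
   prefers +1 under every h in H, so the +1 set grows one node at a time up to V.
   Otherwise the +1 set is itself not cohesive, so one of its players strictly
   prefers -1 under every h in H, and the +1 set shrinks to the empty set.
   Indecomposability also makes every non-consensus configuration unstable,
   which gives (ii).  For (iii) with a = +1, a node k with w_k < h^-_k is a
   cohesive singleton that always prefers +1; growing from V \ {i} shows
   w_i + h^-_i > 0 for all i, so 1 is a strict equilibrium.  The case a = -1
   follows by negating configurations and fields. *)

Set Implicit Arguments. Unset Strict Implicit. Unset Printing Implicit Defensive.
Import Order.TTheory GRing.Theory Num.Theory.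
Local Open Scope ring_scope.

Lemma globally_stable_stuck (V : finType) (step : rel (config V)) (Y : {set config V}) :
  globally_reachable step Y -> (forall y z, y \in Y -> ~~ step y z) ->
  globally_stable step Y.
Proof.
move=> reach stuck; split=> // y [|z s] //= yY /andP[yz _].
by rewrite (negbTE (stuck y z yY)) in yz.
Qed.

Section Network.
Variables (R : realFieldType) (V : finType) (W : V -> V -> R).
Hypothesis netW : is_network W.

Definition local_field (x : config V) (i : V) : R := \sum_j W i j * act R (x j).

Definition config_of (A : {set V}) : config V := [ffun i => i \in A].

Lemma config_ofK (x : config V) : config_of [set i | x i] = x.
Proof. by apply/ffunP => i; rewrite ffunE inE. Qed.

Lemma config_of0 : config_of set0 = cst V false.
Proof. by apply/ffunP => i; rewrite !ffunE inE. Qed.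

Lemma config_ofT : config_of setT = cst V true.
Proof. by apply/ffunP => i; rewrite !ffunE inE. Qed.

Lemma actN b : act R (~~ b) = - act R b.
Proof. by case: b; rewrite /act ?opprK. Qed.

Lemma utilE h i (x : config V) : util W h i x = act R (x i) * (local_field x i + h i).
Proof. by []. Qed.

Lemma wdeg_ge0 i : 0 <= wdeg W i.
Proof. by apply: sumr_ge0 => j _; apply: netW.1. Qed.

Lemma local_field_ge (x : config V) i : - wdeg W i <= local_field x i.
Proof.
rewrite /wdeg -sumrN; apply: ler_sum => j _.
by have := netW.1 i j; case: (x j); rewrite /act; lra.
Qed.

Lemma local_field_le (x : config V) i : local_field x i <= wdeg W i.
Proof. by apply: ler_sum => j _; have := netW.1 i j; case: (x j); rewrite /act; lra. Qed.

Lemma local_field_cst b i : local_field (cst V b) i = act R b * wdeg W i.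
Proof. by rewrite /wdeg mulr_sumr; apply: eq_bigr => j _; rewrite ffunE mulrC. Qed.

Lemma local_field_config_of A i :
  local_field (config_of A) i = wS W i A - wS W i (~: A).
Proof.
rewrite /local_field (bigID (mem A)) /= /wS -sumrN; congr (_ + _).
  by apply: eq_bigr => j jA; rewrite ffunE jA /act mulr1.
apply: eq_big => [j|j jA]; first by rewrite inE.
by rewrite ffunE (negbTE jA) /act mulrN1.
Qed.

Lemma local_field_mono (A B : {set V}) i :
  A \subset B -> local_field (config_of A) i <= local_field (config_of B) i.
Proof.
move=> /subsetP sAB; apply: ler_sum => j _; rewrite !ffunE.
apply: ler_wpM2l; first exact: netW.1.
by case jA: (j \in A); rewrite ?(sAB j jA) //; case: (j \in B); rewrite /act; lra.
Qed.

Lemma util_cst h b i : util W h i (cst V b) = wdeg W i + act R b * h i.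
Proof.
by rewrite utilE local_field_cst ffunE mulrDr mulrA; case: b; rewrite /act; lra.
Qed.

Lemma local_field_eq (x y : config V) i :
  (forall j, j != i -> y j = x j) -> local_field y i = local_field x i.
Proof.
move=> yx; apply: eq_bigr => j _; have [->|/yx -> //] := eqVneq j i.
by rewrite netW.2 !mul0r.
Qed.

Lemma util_adj h i (x y : config V) : adj i x y -> util W h i y = - util W h i x.
Proof.
case/andP => /forallP yx yi; rewrite !utilE.
have -> : y i = ~~ x i by move: yi; case: (y i); case: (x i).
rewrite actN mulNr (local_field_eq (x := x)) // => j ji.
exact/eqP/(implyP (yx j)).
Qed.

Lemma util_setc h i (x : config V) b :
  util W h i (setc x i b) = act R b * (local_field x i + h i).
Proof.
rewrite utilE ffunE eqxx (local_field_eq (x := x)) // => j ji.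
by rewrite ffunE (negbTE ji).
Qed.

Lemma equilibriaP h (x : config V) :
  x \in equilibria W h <-> forall i, 0 <= util W h i x.
Proof.
rewrite inE; split => [/forallP eqx i | ge0]; last first.
  apply/forallP => i; apply/forallP => b; rewrite util_setc.
  have := ge0 i; rewrite utilE.
  by case: b; case: (x i); rewrite /act; lra.
have /forallP/(_ (~~ x i)) := eqx i.
by rewrite util_setc actN utilE mulNr; lra.
Qed.

Lemma Istep_BRstep h : subrel (Istep W h) (BRstep W h).
Proof. by move=> x y /existsP[i /andP[xy lt_u]]; apply/existsP; exists i; rewrite xy ltW. Qed.

Lemma Istep_of_util_lt0 h i (x y : config V) :
  adj i x y -> util W h i x < 0 -> Istep W h x y.
Proof. by move=> xy ux; apply/existsP; exists i; rewrite xy (util_adj h xy) /=; lra. Qed.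

Lemma Istep_from_equilibrium h (x y : config V) :
  x \in equilibria W h -> ~~ Istep W h x y.
Proof.
move/equilibriaP => eqx; apply/existsP => -[i /andP[xy]].
by rewrite (util_adj h xy); have := eqx i; lra.
Qed.

Lemma BRstep_from_strict h (x y : config V) :
  (forall i, 0 < util W h i x) -> ~~ BRstep W h x y.
Proof.
move=> strict; apply/existsP => -[i /andP[xy]].
by rewrite (util_adj h xy); have := strict i; lra.
Qed.

Lemma adj_setU1 (A : {set V}) i : i \notin A -> adj i (config_of A) (config_of (i |: A)).
Proof.
move=> iA; rewrite /adj !ffunE setU11 (negbTE iA) andbT.
by apply/forallP => j; apply/implyP => ji; rewrite !ffunE in_setU1 (negbTE ji).
Qed.

Lemma adj_setD1 (A : {set V}) i : i \in A -> adj i (config_of A) (config_of (A :\ i)).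
Proof.
move=> iA; rewrite /adj !ffunE setD11 iA andbT.
by apply/forallP => j; apply/implyP => ji; rewrite !ffunE in_setD1 ji.
Qed.

Lemma indecomposable_unstable h (x : config V) :
  h_indecomposable W h -> x \notin pm1 V -> exists i, util W h i x < 0.
Proof.
rewrite -(config_ofK x); set A := [set i | x i] => indec.
rewrite !inE negb_or => /andP[xT xF].
have A0 : A != set0 by apply: contraNneq xF => ->; rewrite config_of0.
have AT : ~: A != set0 by apply: contraNneq xT => AT; rewrite -[A]setCK AT setC0 config_ofT.
have [[i iA lt_i]|[i iA lt_i]] := indec A A0 AT; exists i;
  rewrite utilE local_field_config_of ffunE.
- by rewrite iA /act; lra.
- by move: iA; rewrite inE => /negbTE ->; rewrite /act; lra.
Qed.

Lemma equilibria_sub_pm1 h : h_indecomposable W h -> equilibria W h \subset pm1 V.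
Proof.
move=> indec; apply/subsetP => x /equilibriaP eqx.
by apply: contraT => /(indecomposable_unstable indec)[i]; have := eqx i; lra.
Qed.

Section Robust.
Variables hm hp : V -> R.

Definition cohesive (Y : {set V}) : bool :=
  [forall i in Y, 0 <= local_field (config_of Y) i + hp i].

Definition has_cohesive (X : {set V}) : bool :=
  [exists Y : {set V}, [&& Y \subset X, Y != set0 & cohesive Y]].

Lemma has_cohesiveS (X X' : {set V}) : X \subset X' -> has_cohesive X -> has_cohesive X'.
Proof.
move=> sXX' /existsP[Y /and3P[sYX Y0 cohY]]; apply/existsP; exists Y.
by rewrite (subset_trans sYX sXX') Y0.
Qed.

Lemma robust_Ipath_shrink n (X : {set V}) : #|X| = n -> ~~ has_cohesive X ->
  exists s, [/\ size s = n, robust_Ipath W hm hp (config_of X) s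
               & last (config_of X) s = cst V false].
Proof.
elim: n X => [|n IHn] X cardX noY.
  by exists [::]; rewrite /= (cards0_eq cardX) config_of0.
have X0 : X != set0 by apply/eqP => X0; rewrite X0 cards0 in cardX.
have /forallPn[i] : ~~ cohesive X.
  by apply: contra noY => cohX; apply/existsP; exists X; rewrite subxx X0.
rewrite negb_imply -ltNge => /andP[iX lt_i].
have cardXi : #|X :\ i| = n by move: cardX; rewrite (cardsD1 i) iX; case.
have [s [size_s path_s last_s]] :=
  IHn _ cardXi (contra (has_cohesiveS (subD1set X i)) noY).
exists (config_of (X :\ i) :: s); split => //=; first by rewrite size_s.
move=> h hH /=; rewrite path_s // andbT.
apply: (Istep_of_util_lt0 (adj_setD1 iX)).
by rewrite utilE ffunE iX /act; case/andP: (hH i) => _; lra.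
Qed.

Hypothesis hm_le_hp : forall i, hm i <= hp i.
Hypothesis robust : robustly_indecomposable W hm hp.

Lemma cohesive_attracts (Z : {set V}) : Z != set0 -> Z != setT -> cohesive Z ->
  exists2 j, j \notin Z & 0 < local_field (config_of Z) j + hm j.
Proof.
move=> Z0 ZT cohZ.
pose h i := if i \in Z then hp i else hm i.
have hH : inH hm hp h by move=> i; rewrite /h; case: (i \in Z); rewrite lexx hm_le_hp.
have cZ0 : ~: Z != set0 by apply: contraNneq ZT => cZ; rewrite -[Z]setCK cZ setC0.
have [[i iZ]|[j]] := robust hH Z0 cZ0.
  by move: cohZ => /forallP/(_ i); rewrite iZ local_field_config_of /h iZ /=; lra.
rewrite inE => jZ lt_j; exists j => //.
by move: lt_j; rewrite local_field_config_of /h (negbTE jZ); lra.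
Qed.

Lemma cohesive_setU1 (Z : {set V}) j : cohesive Z ->
  0 < local_field (config_of Z) j + hm j -> cohesive (j |: Z).
Proof.
move=> /forallP cohZ lt_j; apply/forallP => i; apply/implyP.
have le_Z i' := local_field_mono i' (subsetUr [set j] Z).
rewrite in_setU1 => /predU1P[->|iZ]; first by have := le_Z j; have := hm_le_hp j; lra.
by have := le_Z i; move: (cohZ i); rewrite iZ /=; lra.
Qed.

Lemma cohesive_spread (X : {set V}) : X != setT -> has_cohesive X ->
  exists2 j, j \notin X & 0 < local_field (config_of X) j + hm j.
Proof.
move=> XT /existsP[Y0 cohY0].
pose P (Z : {set V}) := [&& Z \subset X, Z != set0 & cohesive Z].
have [Z /and3P[sZX Z0 cohZ] maxZ] := @arg_maxnP _ Y0 P (fun Z => #|Z|) cohY0.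
have ZT : Z != setT by apply: contraNneq XT => ZT; rewrite -subTset -ZT.
have [j jZ lt_j] := cohesive_attracts Z0 ZT cohZ.
have jX : j \notin X.
  apply/negP => jX.
  have /maxZ : P (j |: Z).
    by rewrite /P subUset sub1set jX sZX -card_gt0 cardsU1 jZ cohesive_setU1.
  by rewrite cardsU1 jZ add1n => /=; rewrite ltnn.
by exists j => //; have := local_field_mono j sZX; lra.
Qed.

Lemma robust_Ipath_grow n (X : {set V}) : #|~: X| = n -> has_cohesive X ->
  exists s, [/\ size s = n, robust_Ipath W hm hp (config_of X) s
               & last (config_of X) s = cst V true].
Proof.
elim: n X => [|n IHn] X cardX cohX.
  by exists [::]; rewrite /= -[X]setCK (cards0_eq cardX) setC0 config_ofT.
have XT : X != setT by apply/eqP => XT; rewrite XT setCT cards0 in cardX.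
have [j jX lt_j] := cohesive_spread XT cohX.
have cardXj : #|~: (j |: X)| = n.
  by move: cardX; rewrite setCU (cardsD1 j) !inE jX setDE setIC; case.
have [s [size_s path_s last_s]] :=
  IHn _ cardXj (has_cohesiveS (subsetUr [set j] X) cohX).
exists (config_of (j |: X) :: s); split => //=; first by rewrite size_s.
move=> h hH /=; rewrite path_s // andbT.
apply: (Istep_of_util_lt0 (adj_setU1 jX)).
by rewrite utilE ffunE (negbTE jX) /act; case/andP: (hH j); lra.
Qed.

Lemma robust_Ipath_to_pm1 (x : config V) : exists s, (size s <= #|V|)%N /\
  robust_Ipath W hm hp x s /\ last x s \in pm1 V.
Proof.
rewrite -(config_ofK x); set X := [set i | x i].
have [cohX|noY] := boolP (has_cohesive X).
  have [s [size_s path_s last_s]] := robust_Ipath_grow (erefl _) cohX.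
  by exists s; rewrite size_s -(cardsC X) leq_addl last_s !inE eqxx.
have [s [size_s path_s last_s]] := robust_Ipath_shrink (erefl _) noY.
by exists s; rewrite size_s -(cardsC X) leq_addr last_s !inE eqxx orbT.
Qed.

Lemma regular_equilibria h : (forall i, hp i <= wdeg W i) ->
  (forall i, - hm i <= wdeg W i) -> inH hm hp h -> equilibria W h = pm1 V.
Proof.
move=> reg_p reg_m hH; apply/eqP; rewrite eqEsubset (equilibria_sub_pm1 (robust hH)) /=.
apply/subsetP => x; rewrite in_set2 => /orP[] /eqP->; apply/equilibriaP => i;
  by rewrite util_cst /act; have := reg_p i; have := reg_m i; case/andP: (hH i); lra.
Qed.

Section Dominant.
Variable k : V.
Hypothesis dom_k : wdeg W k < hm k.

Lemma dominant_util_lt0 h (x : config V) : inH hm hp h -> x k = false -> util W h k x < 0.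
Proof.
move=> hH xk; rewrite utilE xk /act /=.
by have := dom_k; have := local_field_ge x k; case/andP: (hH k); lra.
Qed.

Lemma cohesive_dominant : cohesive [set k].
Proof.
apply/forallP => i; apply/implyP; rewrite inE => /eqP->.
by have := dom_k; have := local_field_ge (config_of [set k]) k; have := hm_le_hp k; lra.
Qed.

Lemma has_cohesive_dominant (X : {set V}) : k \in X -> has_cohesive X.
Proof.
move=> kX; apply/existsP; exists [set k].
by rewrite sub1set kX cohesive_dominant andbT; apply/set0Pn; exists k; rewrite inE.
Qed.

Lemma wdeg_add_hm_gt0 i : 0 < wdeg W i + hm i.
Proof.
have [->|ik] := eqVneq i k; first by have := dom_k; have := wdeg_ge0 k; lra.
have iT : [set~ i] != setT by apply/eqP => /setP/(_ i); rewrite !inE eqxx.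
have ki : k \in [set~ i] by rewrite !inE eq_sym.
have [j] := cohesive_spread iT (has_cohesive_dominant ki).
by rewrite !inE negbK => /eqP->; have := local_field_le (config_of [set~ i]) i; lra.
Qed.

Lemma dominant_robust_Ipath (x : config V) :
  exists s, robust_Ipath W hm hp x s /\ last x s = cst V true.
Proof.
rewrite -(config_ofK x); set X := [set i | x i].
have [kX|kX] := boolP (k \in X).
  by have [s [_ ? ?]] := robust_Ipath_grow (erefl _) (has_cohesive_dominant kX); exists s.
have [s [_ path_s last_s]] :=
  robust_Ipath_grow (erefl _) (has_cohesive_dominant (setU11 k X)).
exists (config_of (k |: X) :: s); split => // h hH /=; rewrite path_s // andbT.
apply: (Istep_of_util_lt0 (adj_setU1 kX)); apply: dominant_util_lt0 => //.
by rewrite ffunE (negbTE kX).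
Qed.

Lemma dominant_strict h i : inH hm hp h -> 0 < util W h i (cst V true).
Proof.
by move=> hH; rewrite util_cst /act mul1r; have := wdeg_add_hm_gt0 i; case/andP: (hH i); lra.
Qed.

Lemma dominant_equilibria h : inH hm hp h -> equilibria W h = [set cst V true].
Proof.
move=> hH; apply/setP => x; rewrite in_set1; apply/idP/eqP => [eqx|->]; last first.
  by apply/equilibriaP => i; apply/ltW/dominant_strict.
have /(subsetP (equilibria_sub_pm1 (robust hH))) := eqx.
rewrite !inE => /orP[/eqP //|/eqP xF].
have xk : x k = false by rewrite xF ffunE.
by exfalso; have := dominant_util_lt0 hH xk; move/equilibriaP/(_ k): eqx; lra.
Qed.

Lemma dominant_consensus_true :
  (forall x, exists s, robust_Ipath W hm hp x s /\ last x s = cst V true) /\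
  (forall h, inH hm hp h ->
     equilibria W h = [set cst V true] /\ forall z, ~~ BRstep W h (cst V true) z).
Proof.
split=> [|h hH]; first exact: dominant_robust_Ipath.
split; first exact: dominant_equilibria.
by move=> z; apply/BRstep_from_strict => i; apply: dominant_strict.
Qed.

End Dominant.

End Robust.

Lemma robust_Ipath_reachable (hm hp h : V -> R) (step : rel (config V))
  (Y : {set config V}) :
  inH hm hp h -> subrel (Istep W h) step ->
  (forall x, exists s, robust_Ipath W hm hp x s /\ last x s \in Y) ->
  globally_reachable step Y.
Proof.
move=> hH sub paths x; have [s [xs last_s]] := paths x.
by exists s; split; [apply: (sub_path sub); apply: xs | ].
Qed.

Definition negc (x : config V) : config V := [ffun i => ~~ x i].

Lemma negcK : involutive negc.
Proof. by move=> x; apply/ffunP => i; rewrite !ffunE negbK. Qed.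

Lemma negc_cst b : negc (cst V b) = cst V (~~ b).
Proof. by apply/ffunP => i; rewrite !ffunE. Qed.

Lemma local_field_negc (x : config V) i : local_field (negc x) i = - local_field x i.
Proof. by rewrite /local_field -sumrN; apply: eq_bigr => j _; rewrite ffunE actN mulrN. Qed.

Lemma util_negc h i (x : config V) : util W h i (negc x) = util W (\- h) i x.
Proof. by rewrite !utilE local_field_negc ffunE actN /= mulNr -mulrN opprD opprK. Qed.

Lemma adj_negc i (x y : config V) : adj i (negc x) (negc y) = adj i x y.
Proof.
rewrite /adj !ffunE (inj_eq negb_inj); congr (_ && _).
by apply: eq_forallb => j; rewrite !ffunE (inj_eq negb_inj).
Qed.

Lemma Istep_negc h (x y : config V) : Istep W h (negc x) (negc y) = Istep W (\- h) x y.
Proof. by apply: eq_existsb => i; rewrite adj_negc !util_negc. Qed.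

Lemma BRstep_negc h (x y : config V) : BRstep W h (negc x) (negc y) = BRstep W (\- h) x y.
Proof. by apply: eq_existsb => i; rewrite adj_negc !util_negc. Qed.

Lemma equilibria_negc h (x : config V) :
  (negc x \in equilibria W h) = (x \in equilibria W (\- h)).
Proof.
by apply/idP/idP => /equilibriaP eqx; apply/equilibriaP => i; move: (eqx i); rewrite util_negc.
Qed.

Lemma inH_opp (hm hp h : V -> R) : inH hm hp h -> inH (\- hp) (\- hm) (\- h).
Proof. by move=> hH i /=; rewrite !lerN2 andbC. Qed.

Lemma h_indecomposable_opp h : h_indecomposable W (\- h) -> h_indecomposable W h.
Proof.
move=> indec A A0 cA0; rewrite -(setCK A) in A0.
by case: (indec _ cA0 A0) => -[i]; rewrite setCK /= => iA lt_i;
  [right | left]; exists i => //; lra.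
Qed.

Lemma robustly_indecomposable_opp (hm hp : V -> R) :
  robustly_indecomposable W hm hp -> robustly_indecomposable W (\- hp) (\- hm).
Proof.
move=> robust h hH; apply/h_indecomposable_opp/robust => i /=.
by rewrite lerNr lerNl andbC; apply: hH.
Qed.

Lemma robust_Ipath_negc (hm hp : V -> R) (x : config V) s :
  robust_Ipath W (\- hp) (\- hm) x s -> robust_Ipath W hm hp (negc x) (map negc s).
Proof. by move=> xs h hH; rewrite path_map (eq_path (Istep_negc h)); apply/xs/inH_opp. Qed.

Lemma dominant_consensus (hm hp : V -> R) a :
  (forall i, hm i <= hp i) -> robustly_indecomposable W hm hp ->
  (exists k, wdeg W k < act R a * (if a then hm else hp) k) ->
  (forall x, exists s, robust_Ipath W hm hp x s /\ last x s = cst V a) /\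
  (forall h, inH hm hp h ->
     equilibria W h = [set cst V a] /\ forall z, ~~ BRstep W h (cst V a) z).
Proof.
move=> hm_le_hp robust [k]; case: a; rewrite /act /= ?mul1r ?mulN1r => dom_k.
  exact: dominant_consensus_true dom_k.
have hm_le_hp' i : (\- hp) i <= (\- hm) i by rewrite /= lerN2.
have [paths eqs] :=
  dominant_consensus_true hm_le_hp' (robustly_indecomposable_opp robust) dom_k.
split=> [x|h /inH_opp/eqs[eq_h stuck]].
  have [s [xs last_s]] := paths (negc x).
  exists (map negc s); split; first by rewrite -[x]negcK; apply: robust_Ipath_negc.
  by rewrite -[x in last x]negcK last_map last_s negc_cst.
split=> [|z].
  apply/setP => x; rewrite -[x in LHS]negcK equilibria_negc eq_h !in_set1.
  by rewrite -(inj_eq (can_inj negcK)) negcK negc_cst.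
by rewrite -[z]negcK -[cst V false]negcK negc_cst BRstep_negc.
Qed.

End Network.

Theorem theorem4 (R : realFieldType) (V : finType) (W : V -> V -> R)
  (hm hp : V -> R) :
  is_network W ->
  (forall i, hm i <= hp i) ->
  robustly_indecomposable W hm hp ->
  (* (i) *)
  ((forall x : config V, exists s, (size s <= #|V|)%N /\
       robust_Ipath W hm hp x s /\ last x s \in pm1 V) /\
   (forall h, inH hm hp h -> globally_reachable (Istep W h) (pm1 V))) /\
  (* (ii) *)
  ((forall i, hp i <= wdeg W i) -> (forall i, - hm i <= wdeg W i) ->
   forall h, inH hm hp h ->
     equilibria W h = pm1 V /\ globally_stable (Istep W h) (pm1 V)) /\
  (* (iii) ; hma = h^{-a} *)
  (forall a : bool, let hma := if a then hm else hp in
   (forall i, - (act R a * hma i) <= wdeg W i) ->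
   (exists i, wdeg W i < act R a * hma i) ->
   (forall x : config V, exists s,
       robust_Ipath W hm hp x s /\ last x s = cst V a) /\
   (forall h, inH hm hp h ->
     equilibria W h = [set cst V a] /\
     globally_stable (BRstep W h) [set cst V a])).
Proof.
move=> netW hm_le_hp robust.
have paths x : exists s, robust_Ipath W hm hp x s /\ last x s \in pm1 V.
  by have [s [_ ?]] := robust_Ipath_to_pm1 netW hm_le_hp robust x; exists s.
split; [split|split].
- by move=> x; have [s ?] := robust_Ipath_to_pm1 netW hm_le_hp robust x; exists s.
- by move=> h hH; apply: robust_Ipath_reachable hH (fun _ _ => id) paths.
- move=> reg_p reg_m h hH; have eq_h := regular_equilibria netW robust reg_p reg_m hH.
  split=> //; apply: globally_stable_stuck => [|y z]; last first.
    by rewrite -eq_h; apply: Istep_from_equilibrium.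
  exact: robust_Ipath_reachable hH (fun _ _ => id) paths.
move=> a hma _ dom.
have [paths_a eqs] := dominant_consensus netW hm_le_hp robust dom.
split=> // h hH; have [eq_h stuck] := eqs h hH; split=> //.
apply: globally_stable_stuck => [|y z]; last by rewrite in_set1 => /eqP->.
apply: (robust_Ipath_reachable hH (@Istep_BRstep _ _ W h)) => x.
by have [s [xs last_s]] := paths_a x; exists s; rewrite last_s in_set1.
Qed.
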